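(* Fix integers $t\ge1$, $C_1,\dots,C_t\ge 1$, $A_1,\dots,A_t$ and $B_1,\dots,B_t$ with $0\le A_i\le C_i/2$ and $0\le B_i\le C_i/2$ for all $i$, and $m\ge 0$, $N_0\ge 1$. Let $S$ (resp. $T$) be the multiset of positive integers containing, for each $i=1,\dots,t$, one copy of each positive integer congruent to $A_i$ (resp. $B_i$) modulo $C_i$ and, separately, one copy of each positive integer congruent to $-A_i$ (resp. $-B_i$) modulo $C_i$, all copies regarded as distinct elements (so a residue class with $A_i\equiv -A_i$, resp. $B_i\equiv -B_i$, modulo $C_i$ contributes two copies). Let $D_S(N)$ (resp. $D_T(N)$) be the number of partitions of $N$ into distinct elements of $S$ (resp. $T$), where, if no $A_i$ (resp. no $B_i$) equals $0$, only partitions with an odd number of parts are counted. Let $z_A$, $z_B$ be the numbers of indices $i$ with $A_i=0$, resp. $B_i=0$, and set $p=\max(z_B,1)-\max(z_A,1)$. Then the following are equivalent: (i) For every $N\ge N_0$, the number of tuples $(\mu_1,\dots,\mu_t;d_1,\dots,d_t)\in P^t\times\mathbb Z^t$ with $\sum_i d_i$ odd and $\sum_{i}C_i|\mu_i|+\sum_i C_i\binom{d_i}{2}+\sum_i A_id_i=N$ equals the number of tuples $(\alpha_1,\dots,\alpha_t;e_1,\dots,e_t)\in P^t\times\mathbb Z^t$ with $\sum_i e_i$ odd and $\sum_i C_i|\alpha_i|+\sum_i C_i\binom{e_i}{2}+\sum_i B_ie_i+m=N$. (ii) For every $N\ge N_0$, $D_S(N)=2^{p}\cdot D_T(N-m)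$.
   Context: $P$ denotes the set of all integer partitions into positive parts (including the empty partition $\emptyset$, the unique partition of $0$); for a partition $\lambda$, $|\lambda|$ is the sum of its parts. For $d\in\mathbb Z$, $\binom{d}{2}=d(d-1)/2$. A partition of $N$ into distinct elements of a multiset $S$ is a finite set of distinct elements of $S$ (distinct copies of the same integer count as distinct elements) whose values sum to $N$; $D_T(n)=0$ for $n<0$. *)

From HB Require Import structures.
From mathcomp Require Import all_boot all_order all_algebra.
From Stdlib Require Import ClassicalEpsilon.
Set Implicit Arguments. Unset Strict Implicit. Unset Printing Implicit Defensive.
Import Order.TTheory GRing.Theory Num.Theory.

Definition is_card (X : eqType) (P : X -> Prop) (n : nat) : Prop :=
  exists s : seq X, [/\ uniq s, (forall x, P x <-> x \in s) & size s = n].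

(* Number of elements of a finite predicate (0 if P is infinite; this case
   never arises below). *)
Definition ncard (X : eqType) (P : X -> Prop) : nat :=
  match excluded_middle_informative (exists n, is_card P n) with
  | left H => proj1_sig (constructive_indefinite_description _ H)
  | right _ => 0%N
  end.

Definition is_partition (l : seq nat) : bool :=
  sorted geq l && all (fun x => 0 < x)%N l.

Definition binz (d : int) : int := ((d * (d - 1)) %/ 2)%Z.

Local Open Scope ring_scope.

Definition tuple_rep (t : nat) (C A : 'I_t -> nat) (s : nat) (N : int)
    (x : {ffun 'I_t -> seq nat} * {ffun 'I_t -> int}) : Prop :=
  [/\ forall i, is_partition (x.1 i),
      ~~ (2 %| \sum_(i < t) x.2 i)%Z &
      \sum_(i < t) ((C i)%:Z * (sumn (x.1 i))%:Z)
      + \sum_(i < t) ((C i)%:Z * binz (x.2 i))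
      + \sum_(i < t) ((A i)%:Z * x.2 i) + s%:Z = N].

(* The multiset S: its elements are triples (i, b, n); b = true is the copy
   of the class n = A_i mod C_i, b = false the copy of the class
   n = -A_i mod C_i; n positive. *)
Definition inS (t : nat) (C A : 'I_t -> nat) (k : 'I_t * bool) (n : nat) : bool :=
  (0 < n)%N &&
  (if k.2 then n == A k.1 %[mod C k.1] else (C k.1 %| n + A k.1)%N).

(* A partition of N into distinct elements of S: a finite set of elements of
   S, represented, for each copy-class k = (i, b), by the strictly decreasing
   list of the chosen integers of that class. *)
Definition distinct_part (t : nat) (C A : 'I_t -> nat) (N : int)
    (f : {ffun 'I_t * bool -> seq nat}) : Prop :=
  [/\ forall k, sorted (fun a b => b < a)%N (f k) && all (inS C A k) (f k),
      (\sum_(k : 'I_t * bool) sumn (f k))%:Z = N &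
      [forall i, A i != 0%N] -> odd (\sum_(k : 'I_t * bool) size (f k))].

Definition Dcount (t : nat) (C A : 'I_t -> nat) (N : int) : nat :=
  ncard (distinct_part C A N).

Definition zcount (t : nat) (A : 'I_t -> nat) : nat := #|[pred i | A i == 0%N]|.

From HB Require Import structures.
From mathcomp Require Import all_boot all_order all_algebra.
From mathcomp Require Import zify ring lra.
From Stdlib Require Import ClassicalEpsilon Classical.
Import Order.TTheory GRing.Theory Num.Theory.

(* Everything rests on one counting identity, valid for every weight M and
   all residues 0 <= A_i < C_i ([card_tuple_rep]):
       #{(mu; d) of weight M with sum d odd} = 2^(max(z_A, 1) - 1) * D_S(M).
   Applied to A at weight N and to B at weight N - m, it turns (i) into (ii)
   by cancelling powers of 2 in Q.  The identity is bijective, in three steps.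
   1. Maya diagrams.  A partition l of charge d is encoded by the strictly
      decreasing beta-numbers l_j + d - j (j >= 1) above K = d - size l; the
      Maya diagram {beta-numbers} U {n < K} is determined by its nonnegative
      elements P and by the positive h with -h missing, H.  We have
      #P - #H = d and  sum_P (A + C p) + sum_H (C h - A)
                         = C |l| + C binom(d,2) + A d.
   2. Scaling p |-> A + C p, h |-> C h - A sends (P, H) to the parts of the two
      copy classes +-A mod C; over all i this matches tuples with the
      "extended" distinct partitions of S, where 0 may be a part of a class
      with A_i = 0 and the total number of parts is odd.
   3. Zero parts.  Fix j0 with A_j0 = 0 (if any): an extended partition is an
      ordinary one together with the set of the other zero classes holding a
      part 0, the part 0 of class j0 being forced by parity; whence 2^(z_A - 1). *)

Set Implicit Arguments.
Unset Strict Implicit.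
Unset Printing Implicit Defensive.

Lemma is_card_uniq (X : eqType) (P : X -> Prop) n1 n2 :
  is_card P n1 -> is_card P n2 -> n1 = n2.
Proof.
move=> [s1 [u1 m1 <-]] [s2 [u2 m2 <-]].
apply: perm_size; apply: uniq_perm => // x.
by apply/idP/idP => H; [apply/m2/m1 | apply/m1/m2].
Qed.

Lemma ncardE (X : eqType) (P : X -> Prop) n : is_card P n -> ncard P = n.
Proof.
move=> H; rewrite /ncard; case: excluded_middle_informative => [E|[]]; last by exists n.
case: (constructive_indefinite_description _ E) => /= k Hk.
exact: is_card_uniq Hk H.
Qed.

Lemma ncard_inf (X : eqType) (P : X -> Prop) :
  ~ (exists n, is_card P n) -> ncard P = 0%N.
Proof. by move=> H; rewrite /ncard; case: excluded_middle_informative. Qed.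

Lemma is_card_bij (X Y : eqType) (P : X -> Prop) (Q : Y -> Prop)
    (f : X -> Y) (g : Y -> X) n :
  (forall x, P x -> Q (f x)) -> (forall y, Q y -> P (g y)) ->
  (forall x, P x -> g (f x) = x) -> (forall y, Q y -> f (g y) = y) ->
  is_card P n -> is_card Q n.
Proof.
move=> PQ QP gf fg [s [us ms <-]]; exists (map f s); split.
- rewrite map_inj_in_uniq // => x y /ms Px /ms Py E.
  by rewrite -(gf x Px) -(gf y Py) E.
- move=> y; split => [Qy|/mapP [x /ms Px ->]]; last exact: PQ.
  by rewrite -(fg y Qy); apply: map_f; apply/ms/QP.
- by rewrite size_map.
Qed.

Lemma ncard_bij (X Y : eqType) (P : X -> Prop) (Q : Y -> Prop)
    (f : X -> Y) (g : Y -> X) :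
  (forall x, P x -> Q (f x)) -> (forall y, Q y -> P (g y)) ->
  (forall x, P x -> g (f x) = x) -> (forall y, Q y -> f (g y) = y) ->
  ncard P = ncard Q.
Proof.
move=> PQ QP gf fg.
have [[n Hn]|NP] := classic (exists n, is_card P n).
  by rewrite (ncardE Hn) (ncardE (is_card_bij PQ QP gf fg Hn)).
rewrite (ncard_inf NP) ncard_inf // => [[n Hn]]; apply: NP.
by exists n; exact: (is_card_bij QP PQ fg gf Hn).
Qed.

Lemma ncard_ext (X : eqType) (P Q : X -> Prop) :
  (forall x, P x <-> Q x) -> ncard P = ncard Q.
Proof. by move=> H; apply: (@ncard_bij _ _ P Q id id) => // x /H. Qed.

Lemma ncard_prod (X Y : eqType) (P : X -> Prop) (ys : seq Y) : uniq ys ->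
  ncard (fun p : X * Y => P p.1 /\ p.2 \in ys) = (ncard P * size ys)%N.
Proof.
move=> uys.
have [[n Hn]|NP] := classic (exists n, is_card P n).
  rewrite (ncardE Hn); apply: ncardE.
  case: Hn => s [us ms <-]; exists [seq (x, y) | x <- s, y <- ys]; split.
  - by apply: allpairs_uniq => // [[a b]] [c d] _ _ /=.
  - case=> x y /=; split => [[/ms Px yin] | /allpairsP [[a b] [/= /ms Pa bin [-> ->]]]] //.
    by apply/allpairsP; exists (x, y).
  - by rewrite size_allpairs.
rewrite (ncard_inf NP) mul0n.
case: ys uys => [|y0 ys] uys.
  by apply: ncardE; exists [::]; split => // [[x y]]; rewrite in_nil /=; split => // [[]].
apply: ncard_inf => [[n [s [us ms _]]]]; apply: NP.
exists (size (undup (map fst s))), (undup (map fst s)); split => //.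
- exact: undup_uniq.
- move=> x; rewrite mem_undup; split => [Px|/mapP [[x' y'] /ms [Px' _] ->]] //.
  by apply: (map_f fst (x := (x, y0))); apply/ms; rewrite /= in_cons eqxx.
Qed.

Local Open Scope ring_scope.

Definition gtn_rel : rel nat := fun a b => (b < a)%N.
Definition gtz_rel : rel int := fun a b => b < a.

Lemma gtn_trans : transitive gtn_rel.
Proof. by move=> a b c; rewrite /gtn_rel; lia. Qed.
Lemma gtn_irr : irreflexive gtn_rel.
Proof. by move=> a; rewrite /gtn_rel; lia. Qed.
Lemma gtz_trans : transitive gtz_rel.
Proof. by move=> a b c; rewrite /gtz_rel; lia. Qed.
Lemma gtz_irr : irreflexive gtz_rel.
Proof. by move=> a; rewrite /gtz_rel; lia. Qed.

Lemma binz_succ (d : int) : binz (d + 1) = binz d + d.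
Proof.
rewrite /binz.
have -> : (d + 1) * (d + 1 - 1) = d * 2 + d * (d - 1) by ring.
by rewrite divzMDl // addrC.
Qed.

Fixpoint beta_seq (l : seq nat) (d : int) : seq int :=
  if l is x :: l' then (x%:Z + d - 1) :: beta_seq l' (d - 1) else [::].

Fixpoint beta_part (K : int) (xs : seq int) : seq nat :=
  if xs is x :: xs' then absz (x - K - (size xs')%:Z)%R :: beta_part K xs' else [::].

Definition is_beta (K : int) (xs : seq int) : bool :=
  sorted gtz_rel xs && all (fun x => K < x) xs.

Lemma size_beta_seq l d : size (beta_seq l d) = size l.
Proof. by elim: l d => //= x l IH d; rewrite IH. Qed.

Lemma size_beta_part K xs : size (beta_part K xs) = size xs.
Proof. by elim: xs => //= x xs ->. Qed.

Lemma is_beta_cons K x xs : is_beta K (x :: xs) =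
  [&& K < x, (if xs is y :: _ then y < x else true) & is_beta K xs].
Proof.
rewrite /is_beta /gtz_rel /=; case: xs => [|y xs] //=.
by case: (K < x); case: (y < x); rewrite /= ?andbF.
Qed.

Lemma is_beta_head K x xs : is_beta K (x :: xs) -> K + (size xs)%:Z < x.
Proof.
elim: xs x => [|y xs IH] x; first by rewrite is_beta_cons /= addr0 => /andP [].
by rewrite is_beta_cons => /and3P [_ yx /IH] /=; lia.
Qed.

Lemma is_partition_behead x l : is_partition (x :: l) -> is_partition l.
Proof. by case/andP=> /path_sorted sl /andP [_ al]; apply/andP. Qed.

Lemma beta_seq_is_beta l d : is_partition l -> is_beta (d - (size l)%:Z) (beta_seq l d).
Proof.
elim: l d => [|x l IH] d //= Hl; have Hl' := is_partition_behead Hl.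
move: Hl; rewrite /is_partition /= => /andP [Hs /andP [x0 _]].
rewrite is_beta_cons; apply/and3P; split; first by lia.
  by move: Hs; case: l {IH Hl'} => //= y l /andP [yx _]; lia.
have -> : d - (size l).+1%:Z = d - 1 - (size l)%:Z by lia.
exact: IH.
Qed.

Lemma beta_part_is_partition K xs : is_beta K xs -> is_partition (beta_part K xs).
Proof.
elim: xs => [|x xs IH] //= Hv; have Hh := is_beta_head Hv.
move: Hv; rewrite is_beta_cons => /and3P [_ Hyx Hv].
have /andP [Hs Ha] := IH Hv; rewrite /is_partition /= Ha andbT.
apply/andP; split; last by lia.
move: Hs Hyx Hv; case: xs {IH Ha Hh} => //= y xs Hs yx Hv.
by rewrite Hs andbT; have := is_beta_head Hv; lia.
Qed.

Lemma beta_seqK l d : beta_part (d - (size l)%:Z) (beta_seq l d) = l.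
Proof.
elim: l d => //= x l IH d; rewrite size_beta_seq.
have -> : d - (size l).+1%:Z = d - 1 - (size l)%:Z by lia.
by rewrite IH; congr (_ :: _); lia.
Qed.

Lemma beta_partK K xs : is_beta K xs -> beta_seq (beta_part K xs) (K + (size xs)%:Z) = xs.
Proof.
elim: xs => //= x xs IH Hv; have Hh := is_beta_head Hv.
move: Hv; rewrite is_beta_cons => /and3P [_ _ Hv].
have -> : K + (size xs).+1%:Z - 1 = K + (size xs)%:Z by lia.
by rewrite IH //; congr (_ :: _); lia.
Qed.

Lemma beta_seq_weight (C A : nat) l d :
  \sum_(x <- beta_seq l d) (A%:Z + C%:Z * x) + A%:Z * (d - (size l)%:Z)
    + C%:Z * binz (d - (size l)%:Z)
  = A%:Z * d + C%:Z * binz d + C%:Z * (sumn l)%:Z.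
Proof.
elim: l d => [|x l IH] d /=; first by rewrite big_nil subr0; ring.
rewrite big_cons.
have -> : d - (size l).+1%:Z = d - 1 - (size l)%:Z by lia.
have E := IH (d - 1).
have Hb : binz d = binz (d - 1) + (d - 1) by rewrite -binz_succ subrK.
have -> : (x + sumn l)%N%:Z = x%:Z + (sumn l)%:Z by lia.
rewrite Hb; move: E; set S := \sum_(_ <- _) _ => E.
lra.
Qed.

Definition maya (K : int) (xs : seq int) (p : int) : bool := (p \in xs) || (p < K).

Definition maya_PH (P H : seq nat) (p : int) : bool :=
  if 0 <= p then absz p \in P else absz p \notin H.

Definition is_maya_pair (P H : seq nat) : bool :=
  [&& sorted gtn_rel P, sorted gtn_rel H & all (fun h => 0 < h)%N H].

Definition beta_bound (s : seq int) : nat := (sumn (map absz s)).+1.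

Lemma beta_boundP s x : x \in s -> (absz x < beta_bound s)%N.
Proof.
rewrite /beta_bound; elim: s => //= y s IH.
by rewrite in_cons => /orP [/eqP ->|/IH]; lia.
Qed.

Definition maya_pos (K : int) (xs : seq int) : seq nat :=
  [seq n <- rev (iota 0 (absz K + beta_bound xs)) | maya K xs n%:Z].
Definition maya_neg (K : int) (xs : seq int) : seq nat :=
  [seq h <- rev (iota 1 (absz K)) | ~~ maya K xs (- h%:Z)].

Definition mex (P : seq nat) : nat := find (fun n => n \notin P) (iota 0 (size P).+1).

Definition maya_floor (P H : seq nat) : int :=
  if H is h :: _ then - h%:Z else (mex P)%:Z.

Definition irange (lo : int) (len : nat) : seq int :=
  [seq lo + n%:Z | n <- rev (iota 0 len)].

Definition maya_beta (P H : seq nat) : seq int :=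
  [seq x <- irange (maya_floor P H + 1) (absz (maya_floor P H) + sumn P + 1)
     | maya_PH P H x].

Lemma sorted_rev_iota a n : sorted gtn_rel (rev (iota a n)).
Proof. by rewrite rev_sorted; exact: iota_ltn_sorted. Qed.

Lemma mem_maya_pos K xs n : (n \in maya_pos K xs) = maya K xs n%:Z.
Proof.
rewrite /maya_pos mem_filter mem_rev mem_iota add0n /=.
by case E: (maya K xs n) => //=; move: E; rewrite /maya => /orP [/beta_boundP|]; lia.
Qed.

Lemma mem_maya_neg K xs h : (h \in maya_neg K xs) = (0 < h)%N && ~~ maya K xs (- h%:Z).
Proof.
rewrite /maya_neg mem_filter mem_rev mem_iota /maya negb_or.
by case: (- h%:Z \in xs) => /=; [rewrite !andbF | lia].
Qed.

Lemma maya_pair_valid K xs : is_maya_pair (maya_pos K xs) (maya_neg K xs).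
Proof.
apply/and3P; split.
- by apply: (sorted_filter gtn_trans); exact: sorted_rev_iota.
- by apply: (sorted_filter gtn_trans); exact: sorted_rev_iota.
- by apply/allP => h; rewrite mem_maya_neg => /andP [].
Qed.

Lemma mex_notin P : mex P \notin P.
Proof.
have Hh : has (fun n => n \notin P) (iota 0 (size P).+1).
  apply/negPn/negP => /hasPn H.
  have : (size (iota 0 (size P).+1) <= size P)%N.
    by apply: uniq_leq_size; [exact: iota_uniq | move=> x /H; rewrite negbK].
  by rewrite size_iota ltnn.
have Hlt := Hh; rewrite has_find size_iota in Hlt.
by have := nth_find 0%N Hh; rewrite nth_iota ?add0n.
Qed.

Lemma mex_lt P n : (n < mex P)%N -> n \in P.
Proof.
move=> Hn.
have Hs : (mex P <= (size P).+1)%N.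
  by have := find_size (fun n => n \notin P) (iota 0 (size P).+1); rewrite size_iota.
have := before_find 0%N Hn; rewrite nth_iota ?add0n; last by lia.
by move/negbT; rewrite negbK.
Qed.

Definition is_floor (f : int -> bool) (K : int) : Prop :=
  ~~ f K /\ (forall p, p < K -> f p).

Lemma is_floor_uniq (f : int -> bool) K1 K2 : is_floor f K1 -> is_floor f K2 -> K1 = K2.
Proof.
move=> [n1 h1] [n2 h2]; case: (ltgtP K1 K2) => // H.
  by move: (h2 _ H); rewrite (negbTE n1).
by move: (h1 _ H); rewrite (negbTE n2).
Qed.

Lemma maya_floorP P H : is_maya_pair P H -> is_floor (maya_PH P H) (maya_floor P H).
Proof.
case/and3P => _ sH aH; rewrite /maya_floor /maya_PH /is_floor.
case: H sH aH => [|h H] /= sH aH.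
  split; first exact: mex_notin.
  by move=> p Hp; case: ifP => // p0; apply: mex_lt; lia.
move: aH => /andP [h0 _]; have Hall := order_path_min gtn_trans sH.
split.
  have -> : (0 <= - h%:Z) = false by lia.
  by rewrite negbK in_cons abszN absz_nat eqxx.
move=> p Hp; have -> : (0 <= p) = false by lia.
rewrite in_cons negb_or; apply/andP; split; first by lia.
by apply/negP => /(allP Hall); rewrite /gtn_rel; lia.
Qed.

Lemma mayaP K xs : is_beta K xs -> is_floor (maya K xs) K.
Proof.
case/andP => _ /allP Ha; split; last by move=> p Hp; rewrite /maya Hp orbT.
by rewrite /maya ltxx orbF; apply/negP => /Ha; lia.
Qed.

Lemma mem_irange lo len x : (x \in irange lo len) = (lo <= x) && (x < lo + len%:Z).
Proof.
apply/mapP/idP => [[n]|]; rewrite ?mem_rev ?mem_iota; first by move=> Hn ->; lia.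
move=> Hx; exists (absz (x - lo)); last by lia.
by rewrite mem_rev mem_iota; lia.
Qed.

Lemma sorted_irange lo len : sorted gtz_rel (irange lo len).
Proof.
rewrite /irange sorted_map.
by apply: sub_sorted (sorted_rev_iota 0 len) => a b; rewrite /gtn_rel /gtz_rel /=; lia.
Qed.

Lemma nth_le_sumn (P : seq nat) i : (nth 0%N P i <= sumn P)%N.
Proof. by elim: P i => [|a P IH] [|i] //=; [lia | have := IH i; lia]. Qed.

(* [maya_beta P H] lists exactly the elements of the diagram above its floor;
   the bound sumn P on its range covers every element of P. *)
Lemma mem_maya_beta P H x : is_maya_pair P H ->
  (x \in maya_beta P H) = (maya_floor P H < x) && maya_PH P H x.
Proof.
move=> V; rewrite /maya_beta mem_filter mem_irange andbC.
case E: (maya_PH P H x); rewrite ?andbF ?andbT //.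
case: (ltrP (maya_floor P H) x) => Hx /=; last by lia.
have : (0 <= x) -> (absz x <= sumn P)%N.
  move=> x0; move: E; rewrite /maya_PH x0 => /(nthP 0%N) [i Hi <-].
  exact: nth_le_sumn.
lia.
Qed.

Lemma maya_beta_valid P H : is_maya_pair P H -> is_beta (maya_floor P H) (maya_beta P H).
Proof.
move=> V; apply/andP; split.
  by apply: (sorted_filter gtz_trans); exact: sorted_irange.
by apply/allP => x; rewrite mem_maya_beta // => /andP [].
Qed.

Lemma maya_of_pair P H p : is_maya_pair P H ->
  maya (maya_floor P H) (maya_beta P H) p = maya_PH P H p.
Proof.
move=> V; have [n1 h1] := maya_floorP V.
rewrite /maya mem_maya_beta //.
case: (ltgtP p (maya_floor P H)) => [Hp|Hp|->] /=; last by rewrite (negbTE n1).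
- by rewrite h1.
- by rewrite orbF.
Qed.

Lemma maya_PH_of_beta K xs p : maya_PH (maya_pos K xs) (maya_neg K xs) p = maya K xs p.
Proof.
rewrite /maya_PH; case: ifP => p0; first by rewrite mem_maya_pos; congr maya; lia.
rewrite mem_maya_neg negb_and negbK.
have -> : - (absz p)%:Z = p by lia.
by have -> : (0 < absz p)%N by lia.
Qed.

Lemma maya_betaK K xs : is_beta K xs ->
  maya_floor (maya_pos K xs) (maya_neg K xs) = K /\
  maya_beta (maya_pos K xs) (maya_neg K xs) = xs.
Proof.
move=> V; have V' := maya_pair_valid K xs.
have EK : maya_floor (maya_pos K xs) (maya_neg K xs) = K.
  apply: (is_floor_uniq _ (mayaP V)).
  have [n1 h1] := maya_floorP V'; split; first by rewrite -maya_PH_of_beta.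
  by move=> p Hp; rewrite -maya_PH_of_beta h1.
split => //.
apply: (irr_sorted_eq gtz_trans gtz_irr); first by case/andP: (maya_beta_valid V').
  by case/andP: V.
move=> x; rewrite mem_maya_beta // EK maya_PH_of_beta /maya.
case/andP: V => _ /allP Ha.
case E: (x \in xs); first by rewrite orTb (Ha _ E).
by rewrite /=; case: (ltgtP x K).
Qed.

Lemma maya_pairK P H : is_maya_pair P H ->
  maya_pos (maya_floor P H) (maya_beta P H) = P /\
  maya_neg (maya_floor P H) (maya_beta P H) = H.
Proof.
move=> V; have /and3P [s1 s2 _] := maya_pair_valid (maya_floor P H) (maya_beta P H).
case/and3P: (V) => s3 s4 /allP a4.
split; apply: (irr_sorted_eq gtn_trans gtn_irr) => // n.
  by rewrite mem_maya_pos maya_of_pair // /maya_PH lez_nat absz_nat.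
rewrite mem_maya_neg maya_of_pair // /maya_PH.
have -> : (0 <= - n%:Z) = (n == 0)%N by lia.
rewrite abszN absz_nat; case: (n =P 0)%N => [->|_] /=.
  by apply/esym/negP => /a4.
by rewrite negbK; case E: (n \in H); [rewrite andbT a4 | rewrite andbF].
Qed.

(* Its elements p >= 0 carry weight
   A + C p and its missing -h carry C h - A; in terms of beta-numbers above
   K this is the weight of the beta-numbers plus that of the interval
   [0, K) (if K >= 0) or minus that of [K, 0) (if K < 0). *)

Lemma sum_weight_iota (A C : nat) k :
  \sum_(p <- iota 0 k) (A%:Z + C%:Z * p%:Z) = A%:Z * k%:Z + C%:Z * binz k%:Z.
Proof.
elim: k => [|k IH]; first by rewrite big_nil /binz; lia.
rewrite -addn1 iotaD big_cat big_seq1 IH add0n.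
have -> : (k + 1)%N%:Z = k%:Z + 1 by lia.
by rewrite binz_succ -[LHS]/(_ + _)%R; ring.
Qed.

Lemma sum_coweight_iota (A C : nat) k :
  \sum_(h <- iota 1 k) (C%:Z * h%:Z - A%:Z) = A%:Z * (- k%:Z) + C%:Z * binz (- k%:Z).
Proof.
elim: k => [|k IH]; first by rewrite big_nil /binz; lia.
rewrite -[k.+1]addn1 iotaD big_cat big_seq1 IH.
have E := binz_succ (- (k + 1)%N%:Z).
have Ek : - (k + 1)%N%:Z + 1 = - k%:Z by lia.
rewrite Ek in E.
have -> : (1 + k)%N%:Z = k%:Z + 1 by lia.
have -> : (k + 1)%N%:Z = k%:Z + 1 by lia.
by rewrite E -[LHS]/(_ + _)%R; ring.
Qed.

Lemma nil_of_mem (T : eqType) (s : seq T) : (forall x, x \in s = false) -> s = [::].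
Proof. by case: s => // a s H; move: (H a); rewrite in_cons eqxx. Qed.

Lemma mem_map_absz_nonneg (xs : seq int) n : all (fun x => 0 <= x) xs ->
  (n \in map absz xs) = (n%:Z \in xs).
Proof.
move=> /allP Ha; apply/mapP/idP => [[x xin ->]|nin]; last by exists n%:Z.
by have x0 := Ha _ xin; have -> : (absz x)%:Z = x by lia.
Qed.

Lemma uniq_map_absz_nonneg (xs : seq int) : all (fun x => 0 <= x) xs -> uniq xs ->
  uniq (map absz xs).
Proof. by move=> /allP Ha u; rewrite map_inj_in_uniq // => x y /Ha x0 /Ha y0; lia. Qed.

Lemma mem_map_absz_neg (xs : seq int) n :
  (n \in map absz [seq x <- xs | ~~ (0 <= x)]) = (0 < n)%N && (- n%:Z \in xs).
Proof.
apply/mapP/andP => [[x]|[n0 nin]]; rewrite ?mem_filter.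
  by case/andP => x0 xin ->; split; [lia | have -> : - (absz x)%:Z = x by lia].
by exists (- n%:Z); [rewrite mem_filter nin andbT; lia | lia].
Qed.

Lemma uniq_map_absz_neg (xs : seq int) : uniq xs ->
  uniq (map absz [seq x <- xs | ~~ (0 <= x)]).
Proof.
move=> u; rewrite map_inj_in_uniq ?filter_uniq // => x y.
by rewrite !mem_filter => /andP [x0 _] /andP [y0 _]; lia.
Qed.

Lemma uniq_maya_pos K xs : uniq (maya_pos K xs).
Proof. by rewrite filter_uniq // rev_uniq iota_uniq. Qed.

Lemma uniq_maya_neg K xs : uniq (maya_neg K xs).
Proof. by rewrite filter_uniq // rev_uniq iota_uniq. Qed.

Lemma is_beta_uniq K xs : is_beta K xs -> uniq xs.
Proof. by case/andP => s _; apply: (sorted_uniq gtz_trans gtz_irr). Qed.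

Lemma maya_nonneg_floor K xs : is_beta K xs -> 0 <= K ->
  maya_neg K xs = [::] /\ perm_eq (maya_pos K xs) (map absz xs ++ iota 0 (absz K)).
Proof.
move=> V K0; have u := is_beta_uniq V.
have Ha : all (fun x => 0 <= x) xs.
  by case/andP: V => _ /allP Ha; apply/allP => x /Ha; lia.
split.
  apply: nil_of_mem => h; rewrite mem_maya_neg /maya.
  have -> : (- h%:Z < K) = (0 < h)%N || (0 < K) by lia.
  by case: (0 < h)%N; rewrite /= ?orbT ?andbF.
apply: uniq_perm; first exact: uniq_maya_pos.
  rewrite cat_uniq uniq_map_absz_nonneg // iota_uniq andbT /=.
  apply/hasPn => n; rewrite mem_iota mem_map_absz_nonneg // => Hn.
  by apply/negP => /(allP (proj2 (andP V))); lia.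
by move=> n; rewrite mem_maya_pos /maya mem_cat mem_map_absz_nonneg // mem_iota; congr orb; lia.
Qed.

Lemma maya_neg_floor K xs : is_beta K xs -> K < 0 ->
  perm_eq (maya_pos K xs) (map absz [seq x <- xs | 0 <= x]) /\
  perm_eq (maya_neg K xs ++ map absz [seq x <- xs | ~~ (0 <= x)]) (iota 1 (absz K)).
Proof.
move=> V K0; have u := is_beta_uniq V; have Ha := proj2 (andP V).
split.
  apply: uniq_perm; first exact: uniq_maya_pos.
    by apply: uniq_map_absz_nonneg; [exact: filter_all | rewrite filter_uniq].
  move=> n; rewrite mem_maya_pos /maya mem_map_absz_nonneg ?filter_all // mem_filter.
  have -> : (n%:Z < K) = false by lia.
  by rewrite orbF andbC; case: (n%:Z \in xs); rewrite ?andbF ?andbT //; lia.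
apply: uniq_perm; last 1 first.
- move=> h; rewrite mem_cat mem_maya_neg mem_map_absz_neg mem_iota /maya.
  by case E: (- h%:Z \in xs) => /=; [have := allP Ha _ E; lia | lia].
- rewrite cat_uniq uniq_maya_neg uniq_map_absz_neg //= andbT.
  apply/hasPn => h; rewrite mem_map_absz_neg mem_maya_neg /maya => /andP [_ ->] /=.
  by rewrite andbF.
- exact: iota_uniq.
Qed.

Lemma maya_weight (A C : nat) K xs : is_beta K xs ->
  \sum_(p <- maya_pos K xs) (A%:Z + C%:Z * p%:Z)
    + \sum_(h <- maya_neg K xs) (C%:Z * h%:Z - A%:Z)
  = \sum_(x <- xs) (A%:Z + C%:Z * x) + A%:Z * K + C%:Z * binz K.
Proof.
move=> V; have Ha := allP (proj2 (andP V)).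
case: (lerP 0 K) => K0.
  have [-> Pp] := maya_nonneg_floor V K0.
  rewrite big_nil addr0 (perm_big _ Pp) big_cat big_map sum_weight_iota /=.
  have -> : (absz K)%:Z = K by lia.
  rewrite addrA; congr (_ + _ + _); apply: eq_big_seq => x /Ha Kx.
  by have -> : (absz x)%:Z = x by lia.
have [P1 P2] := maya_neg_floor V K0.
have E : \sum_(h <- maya_neg K xs ++ map absz [seq x <- xs | ~~ (0 <= x)])
             (C%:Z * h%:Z - A%:Z) = \sum_(h <- iota 1 (absz K)) (C%:Z * h%:Z - A%:Z).
  exact: perm_big.
rewrite big_cat big_map sum_coweight_iota /= (@big_filter _ _ _ _ xs) in E.
have EK : - (absz K)%:Z = K by lia.
rewrite EK in E.
rewrite (perm_big _ P1) big_map (@big_filter _ _ _ _ xs).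
rewrite [X in _ = X + _ + _](@bigID _ _ _ _ xs (fun x => 0 <= x)) /=.
have EN : \sum_(i <- xs | ~~ (0 <= i)) (C%:Z * (absz i)%:Z - A%:Z)
        = - \sum_(i <- xs | true && ~~ (0 <= i)) (A%:Z + C%:Z * i).
  rewrite -sumrN; apply: eq_bigr => x x0.
  have -> : (absz x)%:Z = - x by lia.
  ring.
have EP : \sum_(i <- xs | 0 <= i) (A%:Z + C%:Z * (absz i)%:Z)
        = \sum_(i <- xs | true && (0 <= i)) (A%:Z + C%:Z * i).
  by apply: eq_bigr => x x0; have -> : (absz x)%:Z = x by lia.
rewrite EN in E; rewrite EP; move: E; rewrite -[LHS]/(_ + _)%R => E.
lra.
Qed.

Lemma maya_charge K xs : is_beta K xs ->
  (size (maya_pos K xs))%:Z - (size (maya_neg K xs))%:Z = K + (size xs)%:Z.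
Proof.
move=> V; case: (lerP 0 K) => K0.
  have [-> Pp] := maya_nonneg_floor V K0.
  by rewrite (perm_size Pp) size_cat size_map size_iota /=; lia.
have [/perm_size P1 /perm_size P2] := maya_neg_floor V K0.
have Hsplit : addn (size [seq x <- xs | 0 <= x]) (size [seq x <- xs | ~~ (0 <= x)])
              = size xs by rewrite !size_filter count_predC.
rewrite size_cat !size_map size_iota in P1 P2.
rewrite P1; move: (size (maya_neg K xs)) P2 => nneg P2; clear V P1.
by move: Hsplit P2; set np := size _; set nn := size _; lia.
Qed.

Section ResidueClasses.
Local Close Scope ring_scope.

Definition pos_term (C A p : nat) : nat := A + C * p.
Definition neg_term (C A h : nat) : nat := C * h - A.
Definition pos_index (C A a : nat) : nat := (a - A) %/ C.
Definition neg_index (C A b : nat) : nat := (b + A) %/ C.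

Definition is_class_pair (C A : nat) (al be : seq nat) : bool :=
  [&& sorted gtn_rel al, all (fun n => n == A %[mod C]) al, sorted gtn_rel be &
      all (fun n => (0 < n) && (C %| n + A)) be].

Variables C A : nat.
Hypotheses (C_gt0 : 0 < C) (A_ltC : A < C).

Lemma pos_term_mono p q : (pos_term C A p < pos_term C A q) = (p < q).
Proof. by rewrite /pos_term ltn_add2l ltn_pmul2l. Qed.

Lemma neg_term_mono p q : (neg_term C A p < neg_term C A q) = (p < q).
Proof.
rewrite /neg_term; case: (ltnP p q) => H.
  have : C * p.+1 <= C * q by rewrite leq_mul2l H orbT.
  by rewrite mulnS; lia.
have : C * q <= C * p by rewrite leq_mul2l H orbT.
lia.
Qed.

Lemma pos_termK p : pos_index C A (pos_term C A p) = p.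
Proof. by rewrite /pos_index /pos_term addKn mulKn. Qed.

Lemma neg_termK h : neg_index C A (neg_term C A h) = h.
Proof.
rewrite /neg_index /neg_term; case: h => [|h].
  by rewrite muln0 sub0n add0n divn_small.
by rewrite subnK ?mulKn // mulnS; lia.
Qed.

Lemma pos_indexK a : a == A %[mod C] -> pos_term C A (pos_index C A a) = a.
Proof.
move=> /eqP H.
have Ha : a = a %/ C * C + A by rewrite {1}(divn_eq a C) H modn_small.
by rewrite /pos_term /pos_index Ha addnK mulnK // mulnC addnC.
Qed.

Lemma neg_indexK b : 0 < b -> C %| b + A -> neg_term C A (neg_index C A b) = b.
Proof.
move=> b0 /dvdnP [q Hq]; rewrite /neg_term /neg_index Hq mulnK //.
by rewrite mulnC -Hq addnK.
Qed.

Lemma neg_index_gt0 b : 0 < b -> C %| b + A -> 0 < neg_index C A b.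
Proof.
move=> b0 /dvdnP [q Hq]; rewrite /neg_index Hq mulnK //.
by case: q Hq => //; lia.
Qed.

Lemma pos_term_mod p : pos_term C A p == A %[mod C].
Proof. by rewrite /pos_term addnC mulnC modnMDl. Qed.

Lemma neg_term_class h : 0 < h -> (0 < neg_term C A h) && (C %| neg_term C A h + A).
Proof.
move=> h0; have Ch : C <= C * h by rewrite leq_pmulr.
by rewrite /neg_term subnK ?dvdn_mulr //; lia.
Qed.

End ResidueClasses.

Lemma sorted_map_mono (f : nat -> nat) s : (forall p q, (f p < f q)%N = (p < q)%N) ->
  sorted gtn_rel (map f s) = sorted gtn_rel s.
Proof.
move=> Hf; rewrite sorted_map.
by apply/idP/idP; apply: sub_sorted => a b; rewrite /= /gtn_rel ?Hf.
Qed.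

Lemma Posz_sum (I : Type) (r : seq I) (F : I -> nat) :
  (\sum_(i <- r) F i)%N%:Z = \sum_(i <- r) (F i)%:Z.
Proof. by rewrite -natz natr_sum; apply: eq_bigr => i _; rewrite natz. Qed.

Definition frob (C A : nat) (l : seq nat) (d : int) : seq nat * seq nat :=
  (map (pos_term C A) (maya_pos (d - (size l)%:Z) (beta_seq l d)),
   map (neg_term C A) (maya_neg (d - (size l)%:Z) (beta_seq l d))).

Definition unfrob (C A : nat) (al be : seq nat) : seq nat * int :=
  let P := map (pos_index C A) al in let H := map (neg_index C A) be in
  (beta_part (maya_floor P H) (maya_beta P H), maya_floor P H + (size (maya_beta P H))%:Z).

Section Frobenius.
Variables C A : nat.
Hypotheses (C_gt0 : (0 < C)%N) (A_ltC : (A < C)%N).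

Lemma frob_class_pair l d : is_partition l -> is_class_pair C A (frob C A l d).1 (frob C A l d).2.
Proof.
move=> Hl; have /and3P [s1 s2 /allP a2] := maya_pair_valid (d - (size l)%:Z) (beta_seq l d).
apply/and4P; split.
- by rewrite sorted_map_mono // => p q; apply: pos_term_mono.
- by apply/allP => x /mapP [p _ ->]; apply: pos_term_mod.
- by rewrite sorted_map_mono // => p q; apply: neg_term_mono.
- by apply/allP => x /mapP [h /a2 h0 ->]; apply: neg_term_class.
Qed.

Lemma map_pos_indexK al : all (fun n => n == A %[mod C])%N al ->
  map (pos_term C A) (map (pos_index C A) al) = al.
Proof.
move=> /allP H; rewrite -map_comp -[RHS]map_id; apply/eq_in_map => x /H.
exact: pos_indexK.
Qed.

Lemma map_neg_indexK be : all (fun n => (0 < n) && (C %| n + A))%N be ->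
  map (neg_term C A) (map (neg_index C A) be) = be.
Proof.
move=> /allP H; rewrite -map_comp -[RHS]map_id; apply/eq_in_map => x /H /andP [? ?].
exact: neg_indexK.
Qed.

Lemma class_pair_maya al be : is_class_pair C A al be ->
  is_maya_pair (map (pos_index C A) al) (map (neg_index C A) be).
Proof.
move=> /and4P [s1 a1 s2 a2]; apply/and3P; split.
- by rewrite -(sorted_map_mono _ (pos_term_mono A C_gt0)) map_pos_indexK.
- by rewrite -(sorted_map_mono _ (neg_term_mono C_gt0 A_ltC)) map_neg_indexK.
- apply/allP => h /mapP [b bin ->].
  by case/andP: (allP a2 _ bin) => ? ?; apply: neg_index_gt0.
Qed.

Lemma unfrob_partition al be : is_class_pair C A al be -> is_partition (unfrob C A al be).1.
Proof. by move=> V; apply/beta_part_is_partition/maya_beta_valid/class_pair_maya. Qed.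

Lemma frobK l d : is_partition l -> unfrob C A (frob C A l d).1 (frob C A l d).2 = (l, d).
Proof.
move=> Hl; rewrite /unfrob /frob /= -!map_comp.
rewrite (eq_map (pos_termK A C_gt0)) (eq_map (neg_termK C_gt0 A_ltC)) !map_id.
have [-> ->] := maya_betaK (beta_seq_is_beta d Hl).
by rewrite beta_seqK size_beta_seq subrK.
Qed.

Lemma unfrobK al be : is_class_pair C A al be ->
  frob C A (unfrob C A al be).1 (unfrob C A al be).2 = (al, be).
Proof.
move=> V; have V' := class_pair_maya V.
rewrite /frob /unfrob /= size_beta_part addrK beta_partK ?maya_beta_valid //.
have [-> ->] := maya_pairK V'.
by case/and4P: V => _ a1 _ a2; rewrite map_pos_indexK // map_neg_indexK.
Qed.

Lemma frob_weight l d : is_partition l ->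
  (sumn (frob C A l d).1)%:Z + (sumn (frob C A l d).2)%:Z
  = A%:Z * d + C%:Z * binz d + C%:Z * (sumn l)%:Z.
Proof.
move=> Hl; rewrite /frob /= -beta_seq_weight -maya_weight; last exact: beta_seq_is_beta.
rewrite !sumnE !big_map !Posz_sum; congr (_ + _); apply: eq_big_seq => h.
rewrite mem_maya_neg => /andP [h0 _].
have : (C <= C * h)%N by rewrite leq_pmulr.
by rewrite /neg_term -PoszM; lia.
Qed.

Lemma frob_charge l d : is_partition l ->
  (size (frob C A l d).1)%:Z - (size (frob C A l d).2)%:Z = d.
Proof.
move=> Hl; rewrite /frob /= !size_map maya_charge; last exact: beta_seq_is_beta.
by rewrite size_beta_seq subrK.
Qed.

End Frobenius.

Lemma sum_pair t (g : 'I_t * bool -> nat) :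
  \sum_(k : 'I_t * bool) g k = \sum_(i < t) (g (i, true) + g (i, false)).
Proof.
transitivity (\sum_(p : 'I_t * bool | xpredT p.1 && xpredT p.2) g (p.1, p.2)).
  by apply: eq_bigr => [[i b]].
rewrite -(pair_big xpredT xpredT (fun i b => g (i, b))); apply: eq_bigr => i _.
by rewrite big_bool.
Qed.

(* Membership in the copy class k of S, except that 0 is admitted in the
   class A_i mod C_i (where it is a part only when A_i = 0). *)
Definition inS_ext t (C A : 'I_t -> nat) (k : 'I_t * bool) (n : nat) : bool :=
  if k.2 then n == A k.1 %[mod C k.1] else (0 < n)%N && (C k.1 %| n + A k.1)%N.

Definition ext_part t (C A : 'I_t -> nat) (M : int) (f : {ffun 'I_t * bool -> seq nat}) : Prop :=
  [/\ forall k, sorted gtn_rel (f k) && all (inS_ext C A k) (f k),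
      Posz (\sum_(k : 'I_t * bool) sumn (f k)) = M &
      odd (\sum_(k : 'I_t * bool) size (f k))].

Definition frob_tuple t (C A : 'I_t -> nat) (x : {ffun 'I_t -> seq nat} * {ffun 'I_t -> int})
  : {ffun 'I_t * bool -> seq nat} :=
  [ffun k => if k.2 then (frob (C k.1) (A k.1) (x.1 k.1) (x.2 k.1)).1
             else (frob (C k.1) (A k.1) (x.1 k.1) (x.2 k.1)).2].

Definition unfrob_tuple t (C A : 'I_t -> nat) (f : {ffun 'I_t * bool -> seq nat})
  : {ffun 'I_t -> seq nat} * {ffun 'I_t -> int} :=
  ([ffun i => (unfrob (C i) (A i) (f (i, true)) (f (i, false))).1],
   [ffun i => (unfrob (C i) (A i) (f (i, true)) (f (i, false))).2]).

Lemma odd_sum_charge t (a b : 'I_t -> nat) (d : 'I_t -> int) :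
  (forall i, (a i)%:Z - (b i)%:Z = d i) ->
  odd (\sum_(i < t) (a i + b i))%N = ~~ (2 %| \sum_(i < t) d i)%Z.
Proof.
move=> H.
have -> : \sum_(i < t) d i
          = (\sum_(i < t) (a i + b i))%N%:Z - 2 * (\sum_(i < t) b i)%N%:Z.
  by rewrite !Posz_sum mulr_sumr -sumrB; apply: eq_bigr => i _; rewrite -H; lia.
lia.
Qed.

Section Tuples.
Variables (t : nat) (C A : 'I_t -> nat) (M : int).
Hypotheses (C_gt0 : forall i, (0 < C i)%N) (A_ltC : forall i, (A i < C i)%N).

Lemma frob_tuple_stats (al be mu : 'I_t -> seq nat) (d : 'I_t -> int) :
  (forall i, is_partition (mu i)) ->
  (forall i, frob (C i) (A i) (mu i) (d i) = (al i, be i)) ->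
  ((\sum_(i < t) ((C i)%:Z * (sumn (mu i))%:Z) + \sum_(i < t) ((C i)%:Z * binz (d i))
    + \sum_(i < t) ((A i)%:Z * d i) + 0%:Z = M) <->
   ((\sum_(i < t) (sumn (al i) + sumn (be i)))%N%:Z = M)) /\
  (~~ (2 %| \sum_(i < t) d i)%Z = odd (\sum_(i < t) (size (al i) + size (be i)))%N).
Proof.
move=> Hp Hph; split; last first.
  rewrite (odd_sum_charge (d := d)) // => i.
  by have := frob_charge (C i) (A i) (d i) (Hp i); rewrite Hph.
suff -> : (\sum_(i < t) (sumn (al i) + sumn (be i)))%N%:Z
  = \sum_(i < t) ((C i)%:Z * (sumn (mu i))%:Z) + \sum_(i < t) ((C i)%:Z * binz (d i))
    + \sum_(i < t) ((A i)%:Z * d i) by rewrite addr0.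
rewrite Posz_sum -!big_split /=; apply: eq_bigr => i _.
have := frob_weight (C_gt0 i) (A_ltC i) (d i) (Hp i).
by rewrite Hph /= PoszD => ->; ring.
Qed.

Lemma ext_part_class_pair f : (forall k, sorted gtn_rel (f k) && all (inS_ext C A k) (f k)) ->
  forall i, is_class_pair (C i) (A i) (f (i, true)) (f (i, false)).
Proof.
move=> Hv i; have /andP [s1 a1] := Hv (i, true); have /andP [s2 a2] := Hv (i, false).
by apply/and4P.
Qed.

Lemma card_tuple_ext : ncard (tuple_rep C A 0 M) = ncard (ext_part C A M).
Proof.
apply: (@ncard_bij _ _ _ _ (frob_tuple C A) (unfrob_tuple C A)).
- move=> [mu d] [/= Hp Hpar Hsum].
  have [[K1 _] K2] := frob_tuple_stats (al := fun i => (frob (C i) (A i) (mu i) (d i)).1)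
                 (be := fun i => (frob (C i) (A i) (mu i) (d i)).2) Hp
                 (fun i => surjective_pairing _).
  split.
  + case=> i b; rewrite ffunE /=.
    have /and4P [s1 a1 s2 a2] := frob_class_pair (C_gt0 i) (A_ltC i) (d i) (Hp i).
    by case: b; rewrite /inS_ext /= ?s1 ?a1 ?s2 ?a2.
  + rewrite (sum_pair (fun k => sumn (frob_tuple C A (mu, d) k))) -{}K1 //.
    by congr Posz; apply: eq_bigr => i _; rewrite !ffunE.
  + rewrite (sum_pair (fun k => size (frob_tuple C A (mu, d) k))).
    by move: Hpar; rewrite K2; congr odd; apply: eq_bigr => i _; rewrite !ffunE.
- move=> f [Hv Hsum Hpar]; have Vi := ext_part_class_pair Hv.
  have Hp i : is_partition ((unfrob_tuple C A f).1 i).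
    by rewrite ffunE; apply: unfrob_partition.
  have Hph i : frob (C i) (A i) ((unfrob_tuple C A f).1 i) ((unfrob_tuple C A f).2 i)
               = (f (i, true), f (i, false)).
    by rewrite !ffunE; apply: unfrobK.
  have [[_ K1] K2] := frob_tuple_stats Hp Hph; split => //.
  + by rewrite K2; move: Hpar; rewrite (sum_pair (fun k => size (f k))).
  + by apply: K1; rewrite -Hsum (sum_pair (fun k => sumn (f k))).
- move=> [mu d] [/= Hp _ _]; congr pair; apply/ffunP => i; rewrite !ffunE;
    by rewrite frobK.
- move=> f [Hv _ _]; apply/ffunP => [[i b]]; rewrite !ffunE.
  by rewrite unfrobK ?ext_part_class_pair //; case: b.
Qed.

End Tuples.

Lemma sorted_split0 (s : seq nat) : sorted gtn_rel s ->
  s = [seq n <- s | (0 < n)%N] ++ (if 0%N \in s then [:: 0%N] else [::]).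
Proof.
elim: s => //= a s IH Hs; have Hs' := path_sorted Hs.
case: a Hs => [|a] Hs; first by move: Hs; case: s {IH Hs'} => //= b s /andP [].
by rewrite in_cons /= {1}(IH Hs').
Qed.

Lemma sumn_filter_gt0 (s : seq nat) : sumn [seq n <- s | (0 < n)%N] = sumn s.
Proof. by elim: s => //= a s IH; case: a => //= a; rewrite IH. Qed.

Lemma sorted_rcons0 (s : seq nat) : sorted gtn_rel s -> all (fun n => 0 < n)%N s ->
  sorted gtn_rel (s ++ [:: 0%N]).
Proof.
elim: s => //= a s IH Hs /andP [a0 Ha]; have Hs' := path_sorted Hs.
move: (IH Hs' Ha) Hs; case: s {IH Ha Hs'} => [|b s] /=; first by rewrite /gtn_rel a0.
by move=> -> /andP [-> _].
Qed.

Lemma sum_indicator t (S : {set 'I_t}) (j0 : 'I_t) (e : bool) : j0 \notin S ->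
  (\sum_(i < t) ((i \in S) || ((i == j0) && e) : nat) = #|S| + e)%N.
Proof.
move=> nj.
have -> : #|S| = (\sum_(i < t) ((i \in S) : nat))%N.
  by rewrite -sum1_card big_mkcond /=; apply: eq_bigr => i _; case: (i \in S).
rewrite (bigD1 j0) //= [X in _ = (X + _)%N](bigD1 j0) //= (negbTE nj) eqxx /=.
rewrite add0n addnC; congr (_ + _)%N; apply: eq_bigr => i /negbTE ->.
by rewrite andFb orbF.
Qed.

Definition nparts t (f : {ffun 'I_t * bool -> seq nat}) : nat :=
  (\sum_(k : 'I_t * bool) size (f k))%N.

Section ZeroParts.
Variables (t : nat) (C A : 'I_t -> nat) (M : int).
Hypothesis A_ltC : forall i, (A i < C i)%N.

Lemma inS_ext_inS k n : inS C A k n = (0 < n)%N && inS_ext C A k n.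
Proof. by rewrite /inS /inS_ext; case: k.2; rewrite //= andbA andbb. Qed.

Lemma zero_inS_ext k : inS_ext C A k 0 = k.2 && (A k.1 == 0%N).
Proof.
rewrite /inS_ext; case: k.2 => //.
by rewrite mod0n modn_small // eq_sym.
Qed.

Lemma inS_gt0 k s : all (inS C A k) s -> all (fun n => 0 < n)%N s.
Proof. by move/allP => H; apply/allP => n /H /andP []. Qed.

Lemma inS_ext_of_inS k s : all (inS C A k) s -> all (inS_ext C A k) s.
Proof. by move/allP => H; apply/allP => n /H; rewrite inS_ext_inS => /andP []. Qed.

Lemma card_ext_part_nozero : [forall i, A i != 0%N] ->
  ncard (ext_part C A M) = Dcount C A M.
Proof.
move=> HA; apply: ncard_ext => f; split; case=> Hv Hs Hp.
  split => // k; case/andP: (Hv k) => s a; rewrite s /=.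
  apply/allP => n nin; rewrite inS_ext_inS (allP a _ nin) andbT.
  case: n nin => // nin; have := allP a _ nin.
  by rewrite zero_inS_ext (negbTE (forallP HA k.1)) andbF.
split; [|done|exact: Hp HA].
by move=> k; case/andP: (Hv k) => -> /inS_ext_of_inS.
Qed.

Variable j0 : 'I_t.
Hypothesis A_j0 : A j0 = 0%N.

Definition other_zeros : {set 'I_t} := [set i | A i == 0%N] :\ j0.

Lemma mem_other_zeros i : (i \in other_zeros) = (i != j0) && (A i == 0%N).
Proof. by rewrite !inE. Qed.

(* An extended partition splits into its positive parts and the set of the
   classes i != j0 having a part 0; conversely parts 0 are added to those
   classes, and to j0 exactly when this makes the number of parts odd. *)
Definition drop_zeros (f : {ffun 'I_t * bool -> seq nat}) :=
  ([ffun k => [seq n <- f k | (0 < n)%N]], [set i in other_zeros | 0%N \in f (i, true)]).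

Definition add_zeros (p : {ffun 'I_t * bool -> seq nat} * {set 'I_t}) :=
  [ffun k => p.1 k ++ (if k.2 && ((k.1 \in p.2) ||
                         ((k.1 == j0) && ~~ odd (nparts p.1 + #|p.2|)))
                      then [:: 0%N] else [::])].

Lemma nparts_add_zeros g (S : {set 'I_t}) : j0 \notin S ->
  nparts (add_zeros (g, S)) = (nparts g + (#|S| + ~~ odd (nparts g + #|S|)))%N.
Proof.
move=> j0S; rewrite /add_zeros /=; set e := ~~ odd _.
rewrite /nparts -(sum_indicator _ j0S) (sum_pair (fun k => size (_ k))).
rewrite (sum_pair (fun k => size (g k))) -big_split /=.
by apply: eq_bigr => i _; rewrite !ffunE /= !size_cat; case: (_ || _) => /=; lia.
Qed.

Section DropZeros.
Variable f : {ffun 'I_t * bool -> seq nat}.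
Hypothesis f_valid : forall k, sorted gtn_rel (f k) && all (inS_ext C A k) (f k).

Lemma zero_part_class i : 0%N \in f (i, true) -> A i = 0%N.
Proof.
by case/andP: (f_valid (i, true)) => _ /allP a /a; rewrite zero_inS_ext => /eqP.
Qed.

Lemma no_zero_part_neg i : 0%N \notin f (i, false).
Proof.
by apply/negP; case/andP: (f_valid (i, false)) => _ /allP a /a; rewrite zero_inS_ext.
Qed.

Lemma mem_drop_zeros i : (i \in (drop_zeros f).2) = (i != j0) && (0%N \in f (i, true)).
Proof.
rewrite /= inE mem_other_zeros.
by case E: (0%N \in f (i, true)); rewrite ?andbF // (zero_part_class E) eqxx !andbT.
Qed.

Lemma size_drop_zeros k : size (f k) = (size ((drop_zeros f).1 k) + (0%N \in f k))%N.
Proof.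
case/andP: (f_valid k) => s _.
by rewrite ffunE {1}(sorted_split0 s) size_cat; case: (0%N \in f k).
Qed.

Lemma nparts_drop_zeros : nparts f =
  (nparts (drop_zeros f).1 + (#|(drop_zeros f).2| + (0%N \in f (j0, true))))%N.
Proof.
have j0S : j0 \notin (drop_zeros f).2 by rewrite mem_drop_zeros eqxx.
rewrite /nparts -(sum_indicator _ j0S).
rewrite (sum_pair (fun k => size (f k))) (sum_pair (fun k => size (_ k))) -big_split /=.
apply: eq_bigr => i _; rewrite !size_drop_zeros (negbTE (no_zero_part_neg i)) mem_drop_zeros.
by case: (i =P j0) => [->|] /=; case: (0%N \in _) => /=; lia.
Qed.

End DropZeros.

Lemma drop_zeros_valid f : ext_part C A M f ->
  distinct_part C A M (drop_zeros f).1 /\ (drop_zeros f).2 \in enum (powerset other_zeros).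
Proof.
move=> [Hv Hs _]; split.
  split; last by move/forallP/(_ j0); rewrite A_j0.
  - move=> k; rewrite ffunE; case/andP: (Hv k) => s /allP a; apply/andP; split.
      exact: (sorted_filter gtn_trans).
    by apply/allP => n; rewrite mem_filter inS_ext_inS => /andP [-> /a].
  - by rewrite -Hs; congr Posz; apply: eq_bigr => k _; rewrite ffunE sumn_filter_gt0.
by rewrite mem_enum powersetE; apply/subsetP => i; rewrite inE => /andP [].
Qed.

Lemma add_zeros_valid g (S : {set 'I_t}) : distinct_part C A M g -> S \in enum (powerset other_zeros) ->
  ext_part C A M (add_zeros (g, S)).
Proof.
move=> [Hv Hs _]; rewrite mem_enum powersetE => HS.
have j0S : j0 \notin S by apply/negP => /(subsetP HS); rewrite mem_other_zeros eqxx.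
split.
- move=> [i b]; rewrite ffunE /=; case/andP: (Hv (i, b)) => s a.
  have a' := inS_ext_of_inS a.
  case: ifP => Hc; last by rewrite cats0 s a'.
  rewrite sorted_rcons0 ?(inS_gt0 a) // all_cat a' /= andbT zero_inS_ext.
  case/andP: Hc => -> /orP [/(subsetP HS)|/andP [/eqP -> _]]; last by rewrite A_j0.
  by rewrite mem_other_zeros => /andP [].
- rewrite -Hs; congr Posz; apply: eq_bigr => k _; rewrite ffunE sumn_cat.
  by case: ifP => //= _; rewrite !addn0.
- by rewrite -/(nparts _) nparts_add_zeros // addnA oddD; case: (odd _).
Qed.

Lemma drop_zerosK f : ext_part C A M f -> add_zeros (drop_zeros f) = f.
Proof.
move=> [Hv _ Hp]; apply/ffunP => [[i b]]; rewrite ffunE /=.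
case/andP: (Hv (i, b)) => s _; rewrite [RHS](sorted_split0 s) ffunE; congr (_ ++ _).
case: b s => s /=; last by rewrite (negbTE (no_zero_part_neg Hv i)).
rewrite mem_drop_zeros //; case: (i =P j0) => [->|_] /=; last by rewrite orbF.
move: Hp; rewrite -/(nparts f) (nparts_drop_zeros Hv) addnA oddD /drop_zeros /=.
by case: (0%N \in _); case: (odd _).
Qed.

Lemma add_zerosK g (S : {set 'I_t}) : distinct_part C A M g -> S \in enum (powerset other_zeros) ->
  drop_zeros (add_zeros (g, S)) = (g, S).
Proof.
move=> [Hv _ _]; rewrite mem_enum powersetE => HS.
have gpos k : all (fun n => 0 < n)%N (g k) by case/andP: (Hv k) => _ /inS_gt0.
congr pair.
  by apply/ffunP => k; rewrite !ffunE filter_cat (all_filterP (gpos k)); case: ifP; rewrite ?cats0.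
apply/setP => i; rewrite !inE ffunE /= mem_cat.
have -> : (0%N \in g (i, true)) = false by apply/negP => /(allP (gpos (i, true))).
case iS: (i \in S); first by have := subsetP HS _ iS; rewrite mem_other_zeros => ->.
by case: (i =P j0) => [->|] /=; rewrite ?eqxx ?andbF // ?andFb; case: ifP.
Qed.

Lemma card_ext_part_zero : ncard (ext_part C A M) = (2 ^ (zcount A - 1) * Dcount C A M)%N.
Proof.
have -> : zcount A = #|other_zeros|.+1.
  have -> : zcount A = #|[set i | A i == 0%N]| by apply: eq_card => i; rewrite !inE.
  by rewrite (cardsD1 j0) inE A_j0 eqxx.
rewrite subn1 /= -card_powerset cardE mulnC /Dcount -ncard_prod ?enum_uniq //.
apply: (@ncard_bij _ _ _ _ drop_zeros add_zeros).
- by move=> f /drop_zeros_valid.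
- by move=> [g S] [Hg HS]; apply: add_zeros_valid.
- exact: drop_zerosK.
- by move=> [g S] [Hg HS]; apply: add_zerosK.
Qed.

End ZeroParts.

Lemma card_ext_part t (C A : 'I_t -> nat) (M : int) : (forall i, (A i < C i)%N) ->
  ncard (ext_part C A M) = (2 ^ (maxn (zcount A) 1 - 1) * Dcount C A M)%N.
Proof.
move=> A_ltC; case: (boolP [forall i, A i != 0%N]) => HA.
  have -> : zcount A = 0%N.
    by apply: eq_card0 => i; rewrite /= inE; apply/negbTE/(forallP HA).
  by rewrite mul1n card_ext_part_nozero.
have [j0 /eqP A_j0] : exists j0, A j0 == 0%N.
  by move: HA; rewrite negb_forall => /existsP [j0]; rewrite negbK; exists j0.
have Hz : (0 < zcount A)%N by apply/card_gt0P; exists j0; rewrite inE A_j0.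
by rewrite (card_ext_part_zero M A_ltC A_j0) (maxn_idPl Hz).
Qed.

Lemma card_tuple_rep t (C A : 'I_t -> nat) (M : int) :
  (forall i, 0 < C i)%N -> (forall i, A i < C i)%N ->
  ncard (tuple_rep C A 0 M) = (2 ^ (maxn (zcount A) 1 - 1) * Dcount C A M)%N.
Proof. by move=> C_gt0 A_ltC; rewrite card_tuple_ext // card_ext_part. Qed.

Lemma tuple_rep_shift t (C A : 'I_t -> nat) (m : nat) (N : int) :
  ncard (tuple_rep C A m N) = ncard (tuple_rep C A 0 (N - m%:Z)).
Proof. by apply: ncard_ext => x; split; case=> h1 h2 h3; split => //; lia. Qed.

Lemma pow2_mul_eq (a b x y : nat) :
  (2 ^ a * x = 2 ^ b * y)%N <-> x%:Q = 2%:Q ^ (b%:Z - a%:Z) * y%:Q.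
Proof.
have e2 n : 2%:Q ^ n%:Z = (2 ^ n)%N%:R by rewrite natrX -exprnP.
have ha : (2 ^ a)%N%:R != 0 :> rat by rewrite pnatr_eq0 expn_eq0.
have cast n : (n%:Z)%:~R = n%:R :> rat by rewrite pmulrn.
rewrite expfzDr // -invr_expz !e2 !cast; split => [E|E].
  by rewrite mulrAC -natrM -E natrM mulrAC mulfV ?mul1r.
by apply/eqP; rewrite -(eqr_nat rat) !natrM E mulrA mulrCA mulfV ?mulr1.
Qed.

Unset Implicit Arguments.

Theorem theorem2p3 (t : nat) (C A B : 'I_t -> nat) (m N0 : nat) :
  (1 <= t)%N ->
  (forall i, 1 <= C i)%N ->
  (forall i, 2 * A i <= C i)%N ->
  (forall i, 2 * B i <= C i)%N ->
  (1 <= N0)%N ->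
  (forall N : nat, (N0 <= N)%N ->
     ncard (tuple_rep C A 0 N%:Z) = ncard (tuple_rep C B m N%:Z))
  <->
  (forall N : nat, (N0 <= N)%N ->
     ((Dcount C A N%:Z)%:Q =
        (2%:Q ^ ((maxn (zcount B) 1)%:Z - (maxn (zcount A) 1)%:Z))
        * (Dcount C B (N%:Z - m%:Z))%:Q)%R).
Proof.
move=> _ C_ge1 A_half B_half _.
have A_ltC i : (A i < C i)%N by have := C_ge1 i; have := A_half i; lia.
have B_ltC i : (B i < C i)%N by have := C_ge1 i; have := B_half i; lia.
have pointwise N :
  ncard (tuple_rep C A 0 N%:Z) = ncard (tuple_rep C B m N%:Z) <->
  (Dcount C A N%:Z)%:Q = 2%:Q ^ ((maxn (zcount B) 1)%:Z - (maxn (zcount A) 1)%:Z)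
                          * (Dcount C B (N%:Z - m%:Z))%:Q.
  rewrite (tuple_rep_shift C B m) !card_tuple_rep // pow2_mul_eq.
  have -> : (maxn (zcount B) 1 - 1)%N%:Z - (maxn (zcount A) 1 - 1)%N%:Z
            = (maxn (zcount B) 1)%:Z - (maxn (zcount A) 1)%:Z by lia.
  by [].
by split => H N /H /pointwise.
Qed.
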